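(* Let $\odot$ be a non-degenerate pseudo-multiplication and let $\tau$ be a $\sigma$-maxitive measure on a $\sigma$-algebra $\mathcal{B}$ on a nonempty set $E$ having the Radon–Nikodym property with respect to the idempotent $\odot$-integral. Then $\tau$ is localizable.
   Context: Write $\overline{\mathbb{R}}_+=[0,\infty]$. A pseudo-multiplication is a binary operation $\odot$ on $\overline{\mathbb{R}}_+$ with the following properties: - it is associative; - it is continuous on $(0,\infty)\times[0,\infty]$; - for every $t$, the map $s\mapsto s\odot t$ is continuous on $(0,\infty]$; - it is nondecreasing in each argument; - it has a left identity $1_\odot$, i.e. $1_\odot\odot t=t$ for all $t$; - it has no zero divisors, i.e. $s\odot t=0$ implies $s=0$ or $t=0$; - $0\odot t=t\odot 0=0$ for all $t$. Put $O(t)=\inf_{s>0}s\odot t$. An element $t$ is $\odot$-finite if $O(t)=0$, and $\odot$-infinite otherwise. The operation $\odot$ is non-degenerate if $1_\odot$ is $\odot$-finite. A $\sigma$-maxitive measure on $\mathcal{B}$ is a map $\nu:\mathcal{B}\to\overline{\mathbb{R}}_+$ with $\nu(\emptyset)=0$ and $\nu(\bigcup_j B_j)=\sup_j\nu(B_j)$ for every countable family. A set is $\tau$-negligible if it is contained in some $B\in\mathcal{B}$ with $\tau(B)=0$. A $\sigma$-ideal of $\mathcal{B}$ is a nonempty subfamily closed under countable unions and under passing to measurable subsets. A map $f:E\to\overline{\mathbb{R}}_+$ is $\mathcal{B}$-measurable if $\{f>t\}\in\mathcal{B}$ for all $t\in[0,\infty)$. The idempotent $\odot$-integral is $\int^\infty_B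 f\odot d\tau=\sup_{t\in[0,\infty)}t\odot\tau(B\cap\{f>t\})$. $\nu\ll_\odot\tau$ means $\nu(B)\le\infty\odot\tau(B)$ for every $B\in\mathcal{B}$ with $\tau(B)$ $\odot$-finite. $\tau$ has the Radon–Nikodym property if every $\sigma$-maxitive $\nu\ll_\odot\tau$ admits a $\mathcal{B}$-measurable $c:E\to\overline{\mathbb{R}}_+$ with $\nu(B)=\int^\infty_B c\odot d\tau$ for all $B\in\mathcal{B}$. $\tau$ is localizable if for every $\sigma$-ideal $\mathcal{I}$ of $\mathcal{B}$ there is $L\in\mathcal{B}$ such that: - $S\setminus L$ is $\tau$-negligible for all $S\in\mathcal{I}$; - whenever $B\in\mathcal{B}$ satisfies that $S\setminus B$ is $\tau$-negligible for all $S\in\mathcal{I}$, the set $L\setminus B$ is $\tau$-negligible. *)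

From Stdlib Require Import Reals.
Open Scope R_scope.

(* The extended half-line [0, +oo]: Some r (with 0 <= r) is the real r, None is +oo. *)
Definition nonneg_opt (x : option R) : Prop :=
  match x with Some r => 0 <= r | None => True end.
Definition ER : Type := { x : option R | nonneg_opt x }.
Definition erval (x : ER) : option R := proj1_sig x.

Definition ER0 : ER := exist nonneg_opt (Some 0) (Rle_refl 0).
Definition ERinf : ER := exist nonneg_opt None I.

Definition ERle (x y : ER) : Prop :=
  match erval x, erval y with
  | _, None => True
  | None, Some _ => False
  | Some a, Some b => a <= b
  end.
Definition ERlt (x y : ER) : Prop := ERle x y /\ x <> y.

Definition is_sup (S : ER -> Prop) (s : ER) : Prop :=
  (forall u, S u -> ERle u s) /\ (forall b, (forall u, S u -> ERle u b) -> ERle s b).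
Definition is_inf (S : ER -> Prop) (s : ER) : Prop :=
  (forall u, S u -> ERle s u) /\ (forall b, (forall u, S u -> ERle b u) -> ERle b s).

(* Basic neighbourhoods for the order topology of [0, +oo]:
   for finite a: {y finite : |y - a| < e}; for a = +oo: {y : y > 1/e}. *)
Definition ball (a : ER) (e : R) (y : ER) : Prop :=
  match erval a, erval y with
  | Some a', Some y' => Rabs (y' - a') < e
  | Some _, None => False
  | None, Some y' => / e < y'
  | None, None => True
  end.

Record pseudo_mult (op : ER -> ER -> ER) (one : ER) : Prop := {
  pm_assoc : forall a b c, op (op a b) c = op a (op b c);
  (* continuity on (0,oo) x [0,oo] (subspace topology) *)
  pm_cont2 : forall s t, ERlt ER0 s -> s <> ERinf ->
    forall e, 0 < e -> exists d, 0 < d /\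
      forall s' t', ERlt ER0 s' -> s' <> ERinf -> ball s d s' -> ball t d t' ->
        ball (op s t) e (op s' t');
  (* for every t, s |-> s (.) t continuous on (0,oo] *)
  pm_cont1 : forall t s, ERlt ER0 s ->
    forall e, 0 < e -> exists d, 0 < d /\
      forall s', ERlt ER0 s' -> ball s d s' -> ball (op s t) e (op s' t);
  pm_mono : forall s s' t t', ERle s s' -> ERle t t' -> ERle (op s t) (op s' t');
  pm_left_id : forall t, op one t = t;
  pm_no_zero_div : forall s t, op s t = ER0 -> s = ER0 \/ t = ER0;
  pm_zero_l : forall t, op ER0 t = ER0;
  pm_zero_r : forall t, op t ER0 = ER0
}.

Definition odot_finite (op : ER -> ER -> ER) (t : ER) : Prop :=
  is_inf (fun u => exists s, ERlt ER0 s /\ u = op s t) ER0.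

Definition non_degenerate (op : ER -> ER -> ER) (one : ER) : Prop :=
  odot_finite op one.

Definition set_sub {E : Type} (A C : E -> Prop) : Prop := forall x, A x -> C x.

Record sigma_algebra {E : Type} (B : (E -> Prop) -> Prop) : Prop := {
  sa_empty : B (fun _ => False);
  sa_compl : forall A, B A -> B (fun x => ~ A x);
  sa_union : forall A : nat -> E -> Prop, (forall n, B (A n)) -> B (fun x => exists n, A n x)
}.

Definition sigma_maxitive {E : Type} (B : (E -> Prop) -> Prop) (nu : (E -> Prop) -> ER) : Prop :=
  nu (fun _ => False) = ER0 /\
  forall A : nat -> E -> Prop, (forall n, B (A n)) ->
    is_sup (fun u => exists n, u = nu (A n)) (nu (fun x => exists n, A n x)).

Definition negligible {E : Type} (B : (E -> Prop) -> Prop) (tau : (E -> Prop) -> ER)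
  (S : E -> Prop) : Prop :=
  exists N, B N /\ tau N = ER0 /\ set_sub S N.

Definition sigma_ideal {E : Type} (B : (E -> Prop) -> Prop) (I : (E -> Prop) -> Prop) : Prop :=
  (exists S, I S) /\
  (forall S, I S -> B S) /\
  (forall A : nat -> E -> Prop, (forall n, I (A n)) -> I (fun x => exists n, A n x)) /\
  (forall S T, I S -> B T -> set_sub T S -> I T).

Definition localizable {E : Type} (B : (E -> Prop) -> Prop) (tau : (E -> Prop) -> ER) : Prop :=
  forall I, sigma_ideal B I ->
    exists L, B L /\
      (forall S, I S -> negligible B tau (fun x => S x /\ ~ L x)) /\
      (forall C, B C -> (forall S, I S -> negligible B tau (fun x => S x /\ ~ C x)) ->
         negligible B tau (fun x => L x /\ ~ C x)).

Definition measurable_fun {E : Type} (B : (E -> Prop) -> Prop) (f : E -> ER) : Prop :=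
  forall t, t <> ERinf -> B (fun x => ERlt t (f x)).

Definition idem_integral_is {E : Type} (op : ER -> ER -> ER) (tau : (E -> Prop) -> ER)
  (f : E -> ER) (A : E -> Prop) (v : ER) : Prop :=
  is_sup (fun u => exists t, t <> ERinf /\ u = op t (tau (fun x => A x /\ ERlt t (f x)))) v.

Definition abs_cont {E : Type} (B : (E -> Prop) -> Prop) (op : ER -> ER -> ER)
  (nu tau : (E -> Prop) -> ER) : Prop :=
  forall A, B A -> odot_finite op (tau A) -> ERle (nu A) (op ERinf (tau A)).

Definition radon_nikodym_property {E : Type} (B : (E -> Prop) -> Prop) (op : ER -> ER -> ER)
  (tau : (E -> Prop) -> ER) : Prop :=
  forall nu, sigma_maxitive B nu -> abs_cont B op nu tau ->
    exists c, measurable_fun B c /\ forall A, B A -> idem_integral_is op tau c A (nu A).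

(* Given a σ-ideal I of B, consider the set function
       nu_I(A) = sup_{S ∈ I} tau(A ∩ S).
   It is σ-maxitive (a countable sup of the σ-maxitive maps A ↦ tau(A ∩ S)) and
   dominated by tau, hence nu_I ≪_⊙ tau because tau(A) = 1_⊙ ⊙ tau(A) ≤ ∞ ⊙ tau(A).
   The Radon–Nikodym property yields a measurable density c of nu_I, and the
   support L = {c > 0} is the required essential supremum of I:
   - for S ∈ I, the integral of c over S \ L vanishes (c = 0 there), so
     tau(S \ L) ≤ nu_I(S \ L) = 0;
   - if every S ∈ I is essentially contained in C, then nu_I(L \ C) = 0, and since
     ⊙ has no zero divisors each tau((L \ C) ∩ {c > 1/(n+1)}) vanishes; their
     countable union is L \ C. *)

From Stdlib Require Import Reals Lra Classical ClassicalEpsilon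
  FunctionalExtensionality PropExtensionality ProofIrrelevance.
Open Scope R_scope.

Lemma ER_eq (x y : ER) : erval x = erval y -> x = y.
Proof.
  destruct x as [x hx], y as [y hy]; simpl; intros ->; f_equal; apply proof_irrelevance.
Qed.

Lemma ERle_refl (x : ER) : ERle x x.
Proof. unfold ERle; destruct (erval x); auto; lra. Qed.

Lemma ERle_trans (x y z : ER) : ERle x y -> ERle y z -> ERle x z.
Proof. unfold ERle; destruct (erval x), (erval y), (erval z); auto; try lra; tauto. Qed.

Lemma ERle_antisym (x y : ER) : ERle x y -> ERle y x -> x = y.
Proof.
  unfold ERle; intros H1 H2; apply ER_eq.
  destruct (erval x), (erval y); try tauto; f_equal; lra.
Qed.

Lemma ERle_0 (x : ER) : ERle ER0 x.
Proof. destruct x as [[r|] h]; unfold ERle; simpl; auto. Qed.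

Lemma ERle_inf (x : ER) : ERle x ERinf.
Proof. unfold ERle; destruct (erval x); simpl; auto. Qed.

Lemma ERle_0_eq (x : ER) : ERle x ER0 -> x = ER0.
Proof. intros H; apply ERle_antisym; [exact H | apply ERle_0]. Qed.

Lemma ERle_lt_trans (a b c : ER) : ERle a b -> ERlt b c -> ERlt a c.
Proof.
  intros H1 [H2 H3]; split; [eapply ERle_trans; eauto|].
  intros ->; apply H3; apply ERle_antisym; auto.
Qed.

Lemma ER0_ne_inf : ER0 <> ERinf.
Proof. intro H; apply (f_equal erval) in H; discriminate. Qed.

(* Completeness of [0, +oo]: every subset has a least upper bound.  This is
   the order-completeness of R, extended by +oo for unbounded sets. *)
Lemma sup_exists (S : ER -> Prop) : exists s, is_sup S s.
Proof.
  destruct (classic (exists u, S u /\ erval u = None)) as [[u [Su Hu]]|Hfin].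
  { exists ERinf; split; [intros; apply ERle_inf|].
    intros b Hb; specialize (Hb u Su); unfold ERle in *; rewrite Hu in Hb.
    destruct (erval b); simpl; tauto. }
  set (P := fun r => exists u, S u /\ erval u = Some r).
  assert (HS : forall u, S u -> exists r, erval u = Some r /\ P r).
  { intros u Su; destruct (erval u) eqn:Eu; [exists r; split; [|exists u]; auto|].
    exfalso; apply Hfin; eauto. }
  assert (Hub : forall b r, erval b = Some r ->
            (forall u, S u -> ERle u b) -> is_upper_bound P r).
  { intros b r Eb Hb x [u [Su Hu]]; specialize (Hb u Su).
    unfold ERle in Hb; rewrite Hu, Eb in Hb; exact Hb. }
  destruct (classic (exists r, P r)) as [Hne|Hemp].
  2:{ exists ER0; split; [|intros; apply ERle_0].
      intros u Su; exfalso; destruct (HS u Su) as [r [_ Pr]]; eauto. }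
  destruct (classic (bound P)) as [Hb|Hunb].
  2:{ exists ERinf; split; [intros; apply ERle_inf|].
      intros b Hb'; unfold ERle; simpl; destruct (erval b) eqn:Eb; auto.
      apply Hunb; exists r; exact (Hub b r Eb Hb'). }
  destruct (completeness P Hb Hne) as [m [Hm1 Hm2]].
  assert (hm : 0 <= m).
  { destruct Hne as [r [[x hx] [Su Hu]]]; simpl in Hu; subst x.
    specialize (Hm1 r (ex_intro _ _ (conj Su eq_refl))); simpl in hx; lra. }
  exists (exist nonneg_opt (Some m) hm); split.
  - intros u Su; destruct (HS u Su) as [r [Hr Pr]].
    unfold ERle; rewrite Hr; simpl; apply Hm1; auto.
  - intros b Hb'; unfold ERle; simpl; destruct (erval b) eqn:Eb; auto.
    exact (Hm2 r (Hub b r Eb Hb')).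
Qed.

(* The points t_n = 1/(n+1) of (0, +oo), used to exhaust the set {c > 0}. *)
Lemma inv_succ_pos (n : nat) : 0 < / (INR n + 1).
Proof. apply Rinv_0_lt_compat; pose proof (pos_INR n); lra. Qed.

Definition tn (n : nat) : ER :=
  exist nonneg_opt (Some (/ (INR n + 1))) (Rlt_le _ _ (inv_succ_pos n)).

Lemma tn_ne0 (n : nat) : tn n <> ER0.
Proof.
  intro H; apply (f_equal erval) in H; simpl in H; injection H.
  pose proof (inv_succ_pos n); lra.
Qed.

Lemma tn_ne_inf (n : nat) : tn n <> ERinf.
Proof. intro H; apply (f_equal erval) in H; discriminate. Qed.

Lemma pos_exists_tn (y : ER) : ERlt ER0 y -> exists n, ERlt (tn n) y.
Proof.
  destruct y as [[r|] hr]; intros [Hle Hne].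
  - unfold ERle in Hle; simpl in Hle.
    assert (Hr : 0 < r).
    { destruct Hle as [|<-]; auto. exfalso; apply Hne, ER_eq; reflexivity. }
    destruct (archimed_cor1 r Hr) as [N [HN1 HN2]]; exists N.
    apply lt_INR in HN2; simpl in HN2.
    assert (Hlt : / (INR N + 1) < / INR N) by (apply Rinv_0_lt_contravar; lra).
    split; [unfold ERle; simpl; lra|].
    intro Heq; apply (f_equal erval) in Heq; simpl in Heq; injection Heq; lra.
  - exists 0%nat; split; [exact I|]. intro H; apply (f_equal erval) in H; discriminate.
Qed.

Lemma pred_ext {E : Type} (P Q : E -> Prop) : (forall x, P x <-> Q x) -> P = Q.
Proof.
  intros H; apply functional_extensionality; intros x; apply propositional_extensionality; auto.
Qed.

Section SigmaMaxitive.

Variables (E : Type) (B : (E -> Prop) -> Prop).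
Hypothesis hB : sigma_algebra B.

(* A σ-algebra is closed under binary intersections (De Morgan). *)
Lemma meas_inter (A C : E -> Prop) : B A -> B C -> B (fun x => A x /\ C x).
Proof.
  intros HA HC.
  set (F := fun (n : nat) x => match n with 0%nat => ~ A x | _ => ~ C x end).
  assert (HF : forall n, B (F n)) by (intros [|n]; apply sa_compl; auto).
  replace (fun x => A x /\ C x) with (fun x => ~ exists n, F n x).
  - apply sa_compl; auto; apply sa_union; auto.
  - apply pred_ext; intros x; split.
    + intros H; split; apply NNPP; intro H'; apply H;
        [exists 0%nat | exists 1%nat]; simpl; auto.
    + intros [H1 H2] [[|n] Hn]; simpl in Hn; tauto.
Qed.

Lemma meas_diff (A C : E -> Prop) : B A -> B C -> B (fun x => A x /\ ~ C x).
Proof. intros HA HC; apply meas_inter; [|apply sa_compl]; auto. Qed.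

Variable tau : (E -> Prop) -> ER.
Hypothesis htau : sigma_maxitive B tau.

Lemma tau_empty : tau (fun _ => False) = ER0.
Proof. exact (proj1 htau). Qed.

(* σ-maxitive measures are monotone: apply maxitivity to the family A, C, C, ... *)
Lemma tau_mono (A C : E -> Prop) :
  B A -> B C -> set_sub A C -> ERle (tau A) (tau C).
Proof.
  intros HA HC Hsub.
  set (F := fun (n : nat) => match n with 0%nat => A | _ => C end).
  assert (HF : forall n, B (F n)) by (intros [|n]; simpl; auto).
  assert (HU : (fun x => exists n, F n x) = C).
  { apply pred_ext; intros x; split.
    - intros [[|n] Hn]; simpl in Hn; auto.
    - intros H; exists 1%nat; exact H. }
  destruct (proj2 htau F HF) as [Hub _]; rewrite HU in Hub.
  apply Hub; exists 0%nat; reflexivity.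
Qed.

Lemma tau_union_null (A : nat -> E -> Prop) :
  (forall n, B (A n)) -> (forall n, tau (A n) = ER0) ->
  tau (fun x => exists n, A n x) = ER0.
Proof.
  intros HA H0; apply ERle_0_eq; apply (proj2 (proj2 htau A HA)).
  intros u [n ->]; rewrite H0; apply ERle_refl.
Qed.

End SigmaMaxitive.

Section IdempotentIntegral.

Variables (E : Type) (B : (E -> Prop) -> Prop) (op : ER -> ER -> ER) (one : ER).
Hypotheses (hB : sigma_algebra B) (hop : pseudo_mult op one).
Variable tau : (E -> Prop) -> ER.
Hypothesis htau : sigma_maxitive B tau.
Variable c : E -> ER.

(* The integral over a set on which c vanishes is 0: every level set is empty
   and t ⊙ 0 = 0. *)
Lemma integral_off_support (A : E -> Prop) (v : ER) :
  (forall x, A x -> ~ ERlt ER0 (c x)) -> idem_integral_is op tau c A v -> v = ER0.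
Proof.
  intros Hc [_ Hleast]; apply ERle_0_eq, Hleast.
  intros u [t [_ ->]].
  replace (fun x => A x /\ ERlt t (c x)) with (fun _ : E => False).
  - rewrite (tau_empty _ _ _ htau), (pm_zero_r _ _ hop); apply ERle_refl.
  - apply pred_ext; intros x; split; [tauto|]. intros [Ax Hx].
    apply (Hc x Ax); eapply ERle_lt_trans; [apply ERle_0 | exact Hx].
Qed.

(* If the integral over A vanishes, the support of c within A is null: each
   t_n ⊙ tau(A ∩ {c > t_n}) is 0, so tau(A ∩ {c > t_n}) = 0 as ⊙ has no zero
   divisors, and A ∩ {c > 0} is the union of these sets. *)
Lemma integral_null_support (A : E -> Prop) :
  B A -> measurable_fun B c -> idem_integral_is op tau c A ER0 ->
  tau (fun x => A x /\ ERlt ER0 (c x)) = ER0.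
Proof.
  intros HA Hc [Hub _].
  set (An := fun n x => A x /\ ERlt (tn n) (c x)).
  assert (HAn : forall n, B (An n)) by (intros n; apply meas_inter, Hc, tn_ne_inf; auto).
  assert (Hnull : forall n, tau (An n) = ER0).
  { intros n.
    assert (H0 : op (tn n) (tau (An n)) = ER0).
    { apply ERle_0_eq, Hub; exists (tn n); split; [apply tn_ne_inf | reflexivity]. }
    destruct (pm_no_zero_div _ _ hop _ _ H0) as [H|H]; [|exact H].
    exfalso; exact (tn_ne0 n H). }
  replace (fun x => A x /\ ERlt ER0 (c x)) with (fun x => exists n, An n x).
  - exact (tau_union_null _ _ _ htau An HAn Hnull).
  - apply pred_ext; intros x; split.
    + intros [n [Ax Hx]]; split; [exact Ax|].
      eapply ERle_lt_trans; [apply ERle_0 | exact Hx].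
    + intros [Ax Hx]; destruct (pos_exists_tn _ Hx) as [n Hn]; exists n; split; auto.
Qed.

End IdempotentIntegral.

Section IdealMeasure.

Variables (E : Type) (B : (E -> Prop) -> Prop).
Hypothesis hB : sigma_algebra B.
Variable tau : (E -> Prop) -> ER.
Hypothesis htau : sigma_maxitive B tau.
Variable I : (E -> Prop) -> Prop.
Hypothesis HIB : forall S, I S -> B S.

Definition nuI (A : E -> Prop) : ER :=
  proj1_sig (constructive_indefinite_description _
    (sup_exists (fun u => exists S, I S /\ u = tau (fun x => A x /\ S x)))).

Lemma nuI_spec (A : E -> Prop) :
  is_sup (fun u => exists S, I S /\ u = tau (fun x => A x /\ S x)) (nuI A).
Proof. unfold nuI; destruct constructive_indefinite_description; auto. Qed.

Lemma tau_le_nuI (A S : E -> Prop) : I S -> set_sub A S -> ERle (tau A) (nuI A).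
Proof.
  intros HS Hsub; apply (proj1 (nuI_spec A)); exists S; split; [exact HS|].
  f_equal; apply pred_ext; intros x; split; [intros Ax; split; auto | tauto].
Qed.

Lemma nuI_le_tau (A : E -> Prop) : B A -> ERle (nuI A) (tau A).
Proof.
  intros HA; apply (proj2 (nuI_spec A)); intros v [S [HS ->]].
  apply (tau_mono _ _ _ htau); [apply meas_inter; auto | exact HA | intros x []; auto].
Qed.

Lemma nuI_mono (A C : E -> Prop) : B A -> B C -> set_sub A C -> ERle (nuI A) (nuI C).
Proof.
  intros HA HC Hsub; apply (proj2 (nuI_spec A)); intros v [S [HS ->]].
  eapply ERle_trans; [|apply (proj1 (nuI_spec C)); exists S; split; [exact HS | reflexivity]].
  apply (tau_mono _ _ _ htau); [apply meas_inter; auto .. |].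
  intros x [Ax Sx]; auto.
Qed.

Lemma nuI_null (A C : E -> Prop) :
  B A -> set_sub A (fun x => ~ C x) ->
  (forall S, I S -> negligible B tau (fun x => S x /\ ~ C x)) -> nuI A = ER0.
Proof.
  intros HA HAC HSC; apply ERle_0_eq, (proj2 (nuI_spec A)).
  intros v [S [HS ->]]; destruct (HSC S HS) as [N [HN [HtN Hsub]]].
  rewrite <- HtN; apply (tau_mono _ _ _ htau); [apply meas_inter; auto | exact HN|].
  intros x [Ax Sx]; apply Hsub; auto.
Qed.

(* nu_I is σ-maxitive: for each S, tau((∪ A_n) ∩ S) = sup_n tau(A_n ∩ S). *)
Lemma nuI_sigma_maxitive : sigma_maxitive B nuI.
Proof.
  split.
  { apply ERle_0_eq; eapply ERle_trans; [apply nuI_le_tau, sa_empty; exact hB|].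
    rewrite (tau_empty _ _ _ htau); apply ERle_refl. }
  intros A HA; assert (HU : B (fun x => exists n, A n x)) by (apply sa_union; auto).
  split.
  - intros u [n ->]; apply nuI_mono; auto; intros x Ax; exists n; exact Ax.
  - intros b Hb; apply (proj2 (nuI_spec _)); intros v [S [HS ->]].
    replace (fun x => (exists n, A n x) /\ S x)
      with (fun x => exists n, (fun n x => A n x /\ S x) n x)
      by (apply pred_ext; intros x; split; [intros [n [An Sx]] | intros [[n An] Sx]]; eauto).
    apply (proj2 (proj2 htau _ (fun n => meas_inter _ _ hB _ _ (HA n) (HIB S HS)))).
    intros w [n ->]; eapply ERle_trans; [|apply Hb; exists n; reflexivity].
    apply (proj1 (nuI_spec (A n))); exists S; split; [exact HS | reflexivity].
Qed.

(* nu_I ≪_⊙ tau, since nu_I(A) ≤ tau(A) = 1_⊙ ⊙ tau(A) ≤ ∞ ⊙ tau(A). *)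
Lemma nuI_abs_cont (op : ER -> ER -> ER) (one : ER) :
  pseudo_mult op one -> abs_cont B op nuI tau.
Proof.
  intros hop A HA _; eapply ERle_trans; [apply nuI_le_tau; exact HA|].
  rewrite <- (pm_left_id _ _ hop (tau A)) at 1.
  apply (pm_mono _ _ hop); [apply ERle_inf | apply ERle_refl].
Qed.

End IdealMeasure.

(* The support L = {c > 0} of a Radon–Nikodym density c of nu_I is an essential
   supremum of the σ-ideal I. *)
Theorem mainTheorem6 (E : Type) (hE : inhabited E) (B : (E -> Prop) -> Prop)
  (hB : sigma_algebra B) (op : ER -> ER -> ER) (one : ER)
  (hop : pseudo_mult op one) (hnd : non_degenerate op one)
  (tau : (E -> Prop) -> ER) (htau : sigma_maxitive B tau)
  (hRN : radon_nikodym_property B op tau) :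
  localizable B tau.
Proof.
  intros I [_ [HIB _]].
  destruct (hRN (nuI E tau I) (nuI_sigma_maxitive E B hB tau htau I HIB)
                   (nuI_abs_cont E B hB tau htau I HIB op one hop)) as [c [Hc Hint]].
  set (L := fun x => ERlt ER0 (c x)).
  assert (HL : B L) by (apply Hc, ER0_ne_inf).
  exists L; split; [exact HL | split].
  -
    intros S HS; exists (fun x => S x /\ ~ L x).
    assert (HN : B (fun x => S x /\ ~ L x)) by (apply meas_diff; auto).
    split; [exact HN | split; [|intros x Hx; exact Hx]].
    apply ERle_0_eq; eapply ERle_trans; [apply (tau_le_nuI E tau I _ S HS); intros x []; auto|].
    rewrite (integral_off_support E B op one hop tau htau c _ (nuI E tau I _)
               (fun x Hx => proj2 Hx) (Hint _ HN)).
    apply ERle_refl.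
  -
    intros C HC HSC; exists (fun x => L x /\ ~ C x).
    assert (HN : B (fun x => L x /\ ~ C x)) by (apply meas_diff; auto).
    split; [exact HN | split; [|intros x Hx; exact Hx]].
    assert (Hnu0 : nuI E tau I (fun x => L x /\ ~ C x) = ER0)
      by (apply (nuI_null E B hB tau htau I HIB _ C HN); [intros x []|]; auto).
    pose proof (Hint _ HN) as Hint0; rewrite Hnu0 in Hint0.
    rewrite <- (integral_null_support E B op one hB hop tau htau c _ HN Hc Hint0).
    f_equal; apply pred_ext; unfold L; tauto.
Qed.
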